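(* For every graph $G$, the following statements are equivalent: (a) $G$ is localizable; (b) $G$ has a partition of $V(G)$ into exactly $\alpha(G)$ strong cliques; (c) $G$ has a partition of $V(G)$ into $\alpha(G)$ cliques, and in every partition of $V(G)$ into $\alpha(G)$ cliques, every clique is strong; (d) $G$ is well-covered and $\theta(G)=\alpha(G)$; (e) $i(G)=\theta(G)$.
   Context: All graphs are finite, simple, undirected. A clique is strong if it intersects every maximal (inclusion-wise) independent set. A graph is localizable if its vertex set admits a partition into strong cliques. A graph is well-covered if all its maximal independent sets have the same size. $\alpha(G)$ is the independence number, $\theta(G)$ the clique cover number (minimum number of cliques partitioning $V(G)$), and $i(G)$ the independent domination number (minimum size of a maximal independent set). *)

(* A finite simple graph is a symmetric irreflexive
   relation e on a finType T (vertex set = T). *)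
From mathcomp Require Import all_boot.
Set Implicit Arguments. Unset Strict Implicit. Unset Printing Implicit Defensive.

Section Graph.
Variables (T : finType) (e : rel T).

Definition simple_graph : Prop := irreflexive e /\ symmetric e.

Definition stable (A : {set T}) : bool :=
  [forall x in A, forall y in A, ~~ e x y].

Definition clique (A : {set T}) : bool :=
  [forall x in A, forall y in A, (x != y) ==> e x y].

Definition max_stable (A : {set T}) : bool := maxset stable A.

Definition strong_clique (C : {set T}) : bool :=
  clique C && [forall I : {set T}, max_stable I ==> (C :&: I != set0)].

Definition clique_partition (P : {set {set T}}) : bool :=
  partition P [set: T] && [forall C in P, clique C].

Definition localizable : Prop :=
  exists P, clique_partition P /\ forall C, C \in P -> strong_clique C.

Definition well_covered : Prop :=
  forall I J, max_stable I -> max_stable J -> #|I| = #|J|.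

Definition alpha : nat := \max_(A : {set T} | stable A) #|A|.

(* clique cover number: minimum size of a partition of V into cliques
   (the partition into singletons has size #|T|) *)
Definition theta : nat :=
  \big[minn/#|T|]_(P : {set {set T}} | clique_partition P) #|P|.

Definition indep_dom : nat :=
  \big[minn/#|T|]_(I : {set T} | max_stable I) #|I|.

End Graph.

(** A clique and an independent set share at most one vertex, so a partition
    into cliques P maps every independent set I injectively into P through
    [pblock P]; hence #|I| <= #|P|, and equality forces every block to meet I.
    In a partition into strong cliques this map is onto for every maximal I,
    so all maximal independent sets have #|P| elements, which yields
    #|P| = alpha = theta = i(G).  Conversely, if i(G) = theta, a minimum clique
    partition Q has #|Q| <= #|I| for every maximal independent set I, so every
    block of Q meets every such I, i.e. Q consists of strong cliques. *)

From mathcomp Require Import all_boot order.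
Set Implicit Arguments. Unset Strict Implicit. Unset Printing Implicit Defensive.

Import Order.TTheory.

Lemma card_partition_le (T : finType) (P : {set {set T}}) (D : {set T}) :
  partition P D -> #|P| <= #|D|.
Proof.
move=> partP; rewrite (card_partition partP) -sum1_card.
apply: leq_sum => B BP; rewrite card_gt0.
exact: partition_neq0 partP BP.
Qed.

Section CliquePartitions.
Variables (T : finType) (e : rel T).

Lemma stable_clique_eq (I C : {set T}) (x y : T) :
  stable e I -> clique e C -> x \in I -> y \in I -> x \in C -> y \in C -> x = y.
Proof.
move=> /forallP stI /forallP clC xI yI xC yC.
apply/eqP; apply: contraT => neq_xy.
have /implyP/(_ yC)/implyP/(_ neq_xy) exy := forallP (implyP (clC x) xC) y.
by have /implyP/(_ yI) := forallP (implyP (stI x) xI) y; rewrite exy.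
Qed.

Lemma clique_partition_partition (P : {set {set T}}) :
  clique_partition e P -> partition P [set: T].
Proof. by case/andP. Qed.

Lemma clique_partition_clique (P : {set {set T}}) (C : {set T}) :
  clique_partition e P -> C \in P -> clique e C.
Proof. by case/andP=> _ /forallP clP CP; exact: implyP (clP C) CP. Qed.

Lemma clique_partition_pblock (P : {set {set T}}) (x : T) :
  clique_partition e P -> pblock P x \in P /\ x \in pblock P x.
Proof.
move=> /clique_partition_partition/cover_partition covP.
by rewrite pblock_mem ?mem_pblock covP inE.
Qed.

Variables (P : {set {set T}}) (I : {set T}).
Hypotheses (cpP : clique_partition e P) (stI : stable e I).

Lemma pblock_stable_inj : {in I &, injective (pblock P)}.
Proof.
move=> x y xI yI exy.
have [Px xPx] := clique_partition_pblock x cpP.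
have [_ yPy] := clique_partition_pblock y cpP; rewrite -exy in yPy.
exact: stable_clique_eq stI (clique_partition_clique cpP Px) xI yI xPx yPy.
Qed.

Lemma pblock_stable_sub : pblock P @: I \subset P.
Proof.
by apply/subsetP=> _ /imsetP[x _ ->]; case: (clique_partition_pblock x cpP).
Qed.

Lemma card_stable_le_partition : #|I| <= #|P|.
Proof.
by rewrite -(card_in_imset pblock_stable_inj) subset_leq_card ?pblock_stable_sub.
Qed.

Lemma partition_meets_stable (C : {set T}) :
  #|P| <= #|I| -> C \in P -> C :&: I != set0.
Proof.
move=> leP CP.
have imP : pblock P @: I = P.
  apply/eqP; rewrite eqEcard pblock_stable_sub card_in_imset //.
  exact: pblock_stable_inj.
rewrite -imP in CP; case/imsetP: CP => x xI ->.
apply/set0Pn; exists x; rewrite inE xI andbT.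
by case: (clique_partition_pblock x cpP).
Qed.

End CliquePartitions.

Section Invariants.
Variables (T : finType) (e : rel T).

Lemma max_stable_stable (I : {set T}) : max_stable e I -> stable e I.
Proof. exact: maxsetp. Qed.

Lemma stable_card_le_alpha (A : {set T}) : stable e A -> #|A| <= alpha e.
Proof. exact: leq_bigmax_cond. Qed.

Lemma alpha_max_stable : exists2 A, max_stable e A & #|A| = alpha e.
Proof.
have st0 : stable e set0 by apply/forallP=> x; rewrite inE.
have [A stA eqA] : exists2 A, stable e A & alpha e = #|A|.
  have /card_gt0P-ne : exists A : {set T}, A \in [pred A | stable e A] by exists set0.
  by have [A] := eq_bigmax_cond (fun A : {set T} => #|A|) ne; exists A.
exists A => //; apply/maxsetP; split=> // B stB subAB.
apply/eqP; rewrite eq_sym eqEcard subAB -eqA.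
exact: stable_card_le_alpha.
Qed.

Lemma theta_le (P : {set {set T}}) : clique_partition e P -> theta e <= #|P|.
Proof. by move=> cpP; rewrite /theta -minEnat; exact: (@bigmin_le_cond _ nat). Qed.

Lemma singleton_clique_partition : clique_partition e (preim_partition id [set: T]).
Proof.
apply/andP; split; first exact: preim_partitionP.
apply/forallP=> C; apply/implyP=> /imsetP[x _ ->].
apply/forallP=> y; apply/implyP; rewrite inE => /andP[_ /eqP <-].
by apply/forallP=> z; apply/implyP; rewrite inE => /andP[_ /eqP <-]; rewrite eqxx.
Qed.

Lemma theta_clique_partition : exists2 P, clique_partition e P & #|P| = theta e.
Proof.
have le_T P : clique_partition e P -> #|P| <= #|T|.
  by move=> /clique_partition_partition/card_partition_le; rewrite cardsT.
have [P cpP eqP] := @eq_bigmin _ nat _ #|T| _ _ (fun P : {set {set T}} => #|P|)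
  singleton_clique_partition le_T.
by exists P => //; rewrite /theta -minEnat eqP.
Qed.

Lemma alpha_le_theta : alpha e <= theta e.
Proof.
have [A maxA <-] := alpha_max_stable; have [Q cpQ <-] := theta_clique_partition.
exact: card_stable_le_partition cpQ (max_stable_stable maxA).
Qed.

Lemma indep_dom_le (I : {set T}) : max_stable e I -> indep_dom e <= #|I|.
Proof. by move=> maxI; rewrite /indep_dom -minEnat; exact: (@bigmin_le_cond _ nat). Qed.

Lemma indep_dom_max_stable : exists2 I, max_stable e I & #|I| = indep_dom e.
Proof.
have [A maxA _] := alpha_max_stable.
have [I maxI eqI] := @eq_bigmin _ nat _ #|T| _ _ (fun I : {set T} => #|I|) maxA
  (fun I _ => max_card I).
by exists I => //; rewrite /indep_dom -minEnat eqI.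
Qed.

Lemma well_covered_indep_dom : well_covered e -> indep_dom e = alpha e.
Proof.
move=> wc; have [A maxA <-] := alpha_max_stable.
by have [I maxI <-] := indep_dom_max_stable; exact: wc.
Qed.

End Invariants.

Section StrongPartitions.
Variables (T : finType) (e : rel T) (P : {set {set T}}).
Hypothesis cpP : clique_partition e P.

Lemma strong_clique_partition_of_card :
  #|P| <= indep_dom e -> forall C, C \in P -> strong_clique e C.
Proof.
move=> leP C CP; rewrite /strong_clique (clique_partition_clique cpP CP) /=.
apply/forallP=> I; apply/implyP=> maxI.
apply: partition_meets_stable cpP (max_stable_stable maxI) _ _ CP.
exact: leq_trans leP (indep_dom_le maxI).
Qed.

Hypothesis strongP : forall C, C \in P -> strong_clique e C.

Lemma strong_partition_card_max_stable (I : {set T}) :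
  max_stable e I -> #|I| = #|P|.
Proof.
move=> maxI; have stI := max_stable_stable maxI.
apply/eqP; rewrite eqn_leq (card_stable_le_partition cpP stI) /=.
rewrite -(card_in_imset (pblock_stable_inj cpP stI)) subset_leq_card //.
apply/subsetP=> C CP; have /andP[_ /forallP meetC] := strongP CP.
have /set0Pn[x] := implyP (meetC I) maxI; rewrite inE => /andP[xC xI].
apply/imsetP; exists x => //.
by rewrite (def_pblock (partition_trivIset (clique_partition_partition cpP)) CP xC).
Qed.

Lemma strong_partition_card_alpha : #|P| = alpha e.
Proof.
by have [A maxA <-] := alpha_max_stable e; rewrite strong_partition_card_max_stable.
Qed.

Lemma strong_partition_well_covered : well_covered e.
Proof. by move=> I J maxI maxJ; rewrite !strong_partition_card_max_stable. Qed.

Lemma strong_partition_theta : theta e = alpha e.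
Proof.
apply/eqP; rewrite eqn_leq alpha_le_theta andbT.
by rewrite -strong_partition_card_alpha theta_le.
Qed.

End StrongPartitions.

Theorem mainTheorem3 (T : finType) (e : rel T) (He : simple_graph e) :
  let a := localizable e in
  let b := exists P, [/\ clique_partition e P, #|P| = alpha e &
                         forall C, C \in P -> strong_clique e C] in
  let c := (exists P, clique_partition e P /\ #|P| = alpha e) /\
           (forall P, clique_partition e P -> #|P| = alpha e ->
              forall C, C \in P -> strong_clique e C) in
  let d := well_covered e /\ theta e = alpha e in
  let f := indep_dom e = theta e in
  (a <-> b) /\ (a <-> c) /\ (a <-> d) /\ (a <-> f).
Proof.
move=> a b c d f.
have ad : a -> d.
  by case=> P [cpP strP]; split; [exact: strong_partition_well_covered strP
                                 | exact: strong_partition_theta strP].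
have df : d -> f by case=> wc eq_theta; rewrite /f eq_theta well_covered_indep_dom.
have fa : f -> a.
  move=> eq_id; have [Q cpQ eqQ] := theta_clique_partition e.
  exists Q; split=> //; apply: strong_clique_partition_of_card => //.
  by rewrite eqQ eq_id.
split; [split|split; [split|split; split]] => //; last 2 first.
- by move=> /df /fa.
- by move=> /ad /df.
- by case=> P [cpP strP]; exists P; split=> //; exact: strong_partition_card_alpha strP.
- by case=> P [cpP _ strP]; exists P.
- move=> locG; have [wc _] := ad locG; case: locG => P [cpP strP].
  split; first by exists P; split=> //; exact: strong_partition_card_alpha strP.
  move=> Q cpQ eqQ; apply: strong_clique_partition_of_card => //.
  by rewrite eqQ well_covered_indep_dom.
- by case=> [[P [cpP eqP]] strP]; exists P; split=> //; exact: strP.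
Qed.
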